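(* Let $\mathbb{B}$ be the structure defined in the context, let $t:B^k\to B$ be a polymorphism of $\mathbb{B}$, and let $i\in\{0,\dots,n\}$. Let $l_{a_1},l_{a_2},l_i,l_{i+1},\dots,l_n\in\mathbb{N}_0$ with $l_{a_1}+l_{a_2}+l_i+l_{i+1}+\dots+l_n=k$ and $p:=l_{a_1}+l_{a_2}\le l_i$. Suppose $$t(\underbrace{a_1,\dots,a_1}_{l_{a_1}},\underbrace{a_2,\dots,a_2}_{l_{a_2}},\underbrace{i,\dots,i}_{l_i},\underbrace{i+1,\dots,i+1}_{l_{i+1}},\dots,\underbrace{n,\dots,n}_{l_n})=i.$$ Then for all $x_1,\dots,x_{l_i-p}\in\{0,1,\dots,i-1\}$, $$t(\underbrace{a_1,\dots,a_1}_{p},\underbrace{a_2,\dots,a_2}_{p},x_1,\dots,x_{l_i-p},\underbrace{i+1,\dots,i+1}_{l_{i+1}},\dots,\underbrace{n,\dots,n}_{l_n})\neq a_1$$ and $$t(\underbrace{a_2,\dots,a_2}_{p},\underbrace{a_1,\dots,a_1}_{p},x_1,\dots,x_{l_i-p},\underbrace{i+1,\dots,i+1}_{l_{i+1}},\dots,\underbrace{n,\dots,n}_{l_n})\neq a_2.$$ The same holds if one fixed permutation of the $k$ coordinate positions is applied to the hypothesis tuple and to the conclusion tuples.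
   Context: Fix an integer $n\ge0$. Let $B=\{a_1,a_2,0,1,\dots,n\}$ and, for $r\in\{0,\dots,n+1\}$, let $B_r=\{a_1,a_2,0,1,\dots,r-1\}$ (so $B_0=\{a_1,a_2\}$, $B_{n+1}=B$), with the linear order $a_1<a_2<0<1<\dots<n$. For $i\in\{0,\dots,n\}$ and $j\in\{1,2\}$ let $$R_i^{(j)}=\Big(B_i\times\{a_1,a_2,i\}\setminus\{(a_j,i)\}\Big)\cup\{(r,r): i<r\le n\}\subseteq B^2.$$ Let $\mathbb{B}$ be the relational structure with universe $B$ whose relations are all $R_i^{(j)}$ ($i\in\{0,\dots,n\}$, $j\in\{1,2\}$) together with every nonempty subset $X\subseteq B$ as a unary relation. A polymorphism of $\mathbb{B}$ is an operation $t:B^k\to B$ compatible with all these relations, where compatibility with a relation $R$ means that applying $t$ coordinatewise to any $k$ tuples of $R$ yields a tuple of $R$. *)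

From mathcomp Require Import all_boot all_fingroup.
Set Implicit Arguments. Unset Strict Implicit. Unset Printing Implicit Defensive.

(* Universe B = {a1, a2, 0, 1, ..., n}, encoded as option (option 'I_n.+1):
   a1 = None, a2 = Some None, r = Some (Some r). *)
Definition B (n : nat) : finType := option (option 'I_n.+1).
Definition a1 {n : nat} : B n := None.
Definition a2 {n : nat} : B n := Some None.
Definition num {n : nat} (r : 'I_n.+1) : B n := Some (Some r).

Definition inBr {n : nat} (r : nat) (x : B n) : bool :=
  match x with
  | None => true
  | Some None => true
  | Some (Some s) => (s < r)%N
  end.

Definition aj {n : nat} (j : 'I_2) : B n := if val j == 0%N then a1 else a2.

Definition Rrel {n : nat} (i : 'I_n.+1) (j : 'I_2) (x y : B n) : bool :=
  [&& inBr i x, y \in [:: a1; a2; num i] & ~~ ((x == aj j) && (y == num i))]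
  || [exists r : 'I_n.+1, [&& (i < r)%N, x == num r & y == num r]].

Definition is_polymorphism {n k : nat} (t : {ffun 'I_k -> B n} -> B n) : Prop :=
  (forall (i : 'I_n.+1) (j : 'I_2) (x y : {ffun 'I_k -> B n}),
      (forall m : 'I_k, Rrel i j (x m) (y m)) -> Rrel i j (t x) (t y))
  /\ (forall X : {set B n}, X != set0 ->
      forall x : {ffun 'I_k -> B n}, (forall m : 'I_k, x m \in X) -> t x \in X).

Definition tupleOf {n : nat} (k : nat) (s : seq (B n)) : {ffun 'I_k -> B n} :=
  [ffun m : 'I_k => nth a1 s m].

Definition permute {n k : nat} (sigma : 'S_k) (x : {ffun 'I_k -> B n})
  : {ffun 'I_k -> B n} := [ffun m => x (sigma m)].

Definition tailBlock {n : nat} (i : 'I_n.+1) (l : 'I_n.+1 -> nat) : seq (B n) :=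
  flatten [seq nseq (l r) (num r) | r : 'I_n.+1 <- [seq r <- enum (ordinal n.+1) | (i < nat_of_ord r)%N]].

From mathcomp Require Import all_boot all_fingroup.
Set Implicit Arguments. Unset Strict Implicit. Unset Printing Implicit Defensive.

(* Column by column, the conclusion
   tuple is R_i^(j)-related to the hypothesis tuple:  a_j faces a_1 or a_2,
   the other constant and the x's (all in B_i, none equal to a_j) face i, and
   the tail block faces itself.  Since t preserves R_i^(j) and sends the
   hypothesis tuple to i, the value v of t on the conclusion tuple satisfies
   (v, i) in R_i^(j), which excludes v = a_j. *)

Section All2.
Variables (S T : Type) (r : S -> T -> bool).

Lemma all2_cat (s1 s2 : seq S) (t1 t2 : seq T) :
  all2 r s1 t1 -> all2 r s2 t2 -> all2 r (s1 ++ s2) (t1 ++ t2).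
Proof. by elim: s1 t1 => [|x s1 IH] [|y t1] //= /andP[-> /IH]. Qed.

Lemma all2_nseql x (s : seq T) : all (r x) s -> all2 r (nseq (size s) x) s.
Proof. by elim: s => //= y s IH /andP[-> /IH]. Qed.

Lemma all2_nseqr y (s : seq S) :
  all (fun x => r x y) s -> all2 r s (nseq (size s) y).
Proof. by elim: s => //= x s IH /andP[-> /IH]. Qed.

Lemma all2_nseq m x y : r x y -> all2 r (nseq m x) (nseq m y).
Proof. by move=> rxy; elim: m => //= m ->; rewrite rxy. Qed.

Lemma size_all2 (s : seq S) (t : seq T) : all2 r s t -> size s = size t.
Proof. by elim: s t => [|x s IH] [|y t] //= /andP[_ /IH ->]. Qed.

Lemma all2_nth x0 y0 (s : seq S) (t : seq T) m :
  all2 r s t -> m < size s -> r (nth x0 s m) (nth y0 t m).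
Proof.
elim: s t m => [|x s IH] [|y t] [|m] //= /andP[rxy rst] ltms //.
exact: IH.
Qed.

End All2.

Lemma all2_refl (T : Type) (r : T -> T -> bool) (s : seq T) :
  all (fun x => r x x) s -> all2 r s s.
Proof. by elim: s => //= x s IH /andP[-> /IH]. Qed.

Section Relations.
Variables (n : nat) (i : 'I_n.+1) (j : 'I_2).

Lemma inBr_aj r : inBr r (aj j : B n).
Proof. by rewrite /aj; case: ifP. Qed.

Lemma num_neq_aj r : num r != aj j :> B n.
Proof. by rewrite /aj; case: ifP. Qed.

Lemma Rrel_num_neq_aj x : Rrel i j x (num i) -> x != aj j.
Proof.
case/orP=> [/and3P[_ _]|/existsP[r /and3P[ltir _ /eqP[eri]]]].
  by rewrite eqxx andbT.
by rewrite eri ltnn in ltir.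
Qed.

Lemma Rrel_num x : inBr i x -> x != aj j -> Rrel i j x (num i).
Proof.
by move=> xBi xj; apply/orP; left; rewrite xBi !inE eqxx !orbT (negbTE xj).
Qed.

Lemma Rrel_a1a2 x y : inBr i x -> y \in [:: a1; a2] -> Rrel i j x y.
Proof.
by move=> xBi; rewrite !inE => /orP[] /eqP->; rewrite /Rrel xBi !inE eqxx ?orbT andbF.
Qed.

Lemma Rrel_tailBlock (l : 'I_n.+1 -> nat) :
  all2 (Rrel i j) (tailBlock i l) (tailBlock i l).
Proof.
apply/all2_refl/allP => x /flatten_mapP[r]; rewrite mem_filter.
case/andP=> ltir _ /nseqP[-> _].
by apply/orP; right; apply/existsP; exists r; rewrite ltir eqxx.
Qed.

End Relations.

Lemma size_tailBlock n (i : 'I_n.+1) (l : 'I_n.+1 -> nat) :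
  size (tailBlock i l) = \sum_(r < n.+1 | i < r) l r.
Proof.
rewrite size_flatten /shape -map_comp sumnE big_map big_filter big_enum_cond.
by apply: eq_bigr => r _; rewrite /= size_nseq.
Qed.

Lemma sum_geq_split n (i : 'I_n.+1) (l : 'I_n.+1 -> nat) :
  \sum_(r < n.+1 | i <= r) l r = l i + \sum_(r < n.+1 | i < r) l r.
Proof.
rewrite (bigD1 i) //=; congr (_ + _); apply: eq_bigl => r.
by rewrite ltn_neqAle andbC eq_sym.
Qed.

Lemma polymorphism_all2 n k (t : {ffun 'I_k -> B n} -> B n) i j sigma
    (s1 s2 : seq (B n)) :
  is_polymorphism t -> size s1 = k -> all2 (Rrel i j) s1 s2 ->
  Rrel i j (t (permute sigma (tupleOf k s1))) (t (permute sigma (tupleOf k s2))).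
Proof.
move=> [ht _] sz12 r12; apply: ht => m; rewrite !ffunE.
by apply: all2_nth r12 _; rewrite sz12.
Qed.

Section Conclusion.
Variables (n k : nat) (t : {ffun 'I_k -> B n} -> B n).
Hypothesis ht : is_polymorphism t.
Variables (i : 'I_n.+1) (la1 la2 : nat) (l : 'I_n.+1 -> nat) (sigma : 'S_k).
Hypothesis hsum : la1 + la2 + \sum_(r < n.+1 | i <= r) l r = k.
Hypothesis hp : la1 + la2 <= l i.
Hypothesis hyp : t (permute sigma (tupleOf k
  (nseq la1 a1 ++ nseq la2 a2 ++ nseq (l i) (num i) ++ tailBlock i l))) = num i.

Lemma polymorphism_neq_aj j b (xs : seq 'I_n.+1) :
    inBr i b -> b != aj j ->
    size xs = l i - (la1 + la2) -> all (fun x : 'I_n.+1 => x < i) xs ->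
  t (permute sigma (tupleOf k (nseq (la1 + la2) (aj j) ++
     nseq (la1 + la2) b ++ map num xs ++ tailBlock i l))) != aj j.
Proof.
move=> bBi bj szxs xsi; apply: (@Rrel_num_neq_aj n i); rewrite -hyp.
have split_li : nseq (l i) (num i) =
    nseq (la1 + la2) (num i) ++ nseq (size (map num xs)) (@num n i).
  by rewrite size_map szxs -nseqD subnKC.
have head_a1a2 : all2 (Rrel i j) (nseq (la1 + la2) (aj j))
                                 (nseq la1 a1 ++ nseq la2 a2).
  have -> : la1 + la2 = size (nseq la1 (@a1 n) ++ nseq la2 a2).
    by rewrite size_cat !size_nseq.
  apply: all2_nseql; apply/allP => y; rewrite mem_cat => /orP[] /nseqP[-> _];
    by apply: Rrel_a1a2; rewrite ?inBr_aj ?inE ?eqxx ?orbT.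
have xs_num : all2 (Rrel i j) (map num xs) (nseq (size (map num xs)) (num i)).
  apply: all2_nseqr; apply/allP => _ /mapP[x xin ->].
  by apply: Rrel_num; [exact: (allP xsi) | exact: num_neq_aj].
apply: polymorphism_all2 => //.
  rewrite !size_cat size_map szxs !size_nseq size_tailBlock -hsum sum_geq_split.
  by congr (_ + _); rewrite addnA subnKC.
rewrite split_li -catA [X in all2 _ _ X]catA.
apply: all2_cat head_a1a2 _; apply: all2_cat (all2_nseq _ (Rrel_num bBi bj)) _.
exact: all2_cat xs_num (Rrel_tailBlock _ _ _).
Qed.

End Conclusion.

Theorem mainTheorem8 (n k : nat) (t : {ffun 'I_k -> B n} -> B n)
  (ht : is_polymorphism t) (i : 'I_n.+1)
  (la1 la2 : nat) (l : 'I_n.+1 -> nat)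
  (hsum : (la1 + la2 + \sum_(r < n.+1 | (i <= r)%N) l r)%N = k)
  (hp : (la1 + la2 <= l i)%N)
  (sigma : 'S_k)
  (hyp : t (permute sigma (tupleOf k
            (nseq la1 a1 ++ nseq la2 a2 ++ nseq (l i) (num i) ++ tailBlock i l)))
         = num i) :
  forall xs : seq 'I_n.+1,
    size xs = (l i - (la1 + la2))%N ->
    all (fun x : 'I_n.+1 => (x < i)%N) xs ->
    t (permute sigma (tupleOf k
        (nseq (la1 + la2) a1 ++ nseq (la1 + la2) a2 ++ map num xs ++ tailBlock i l)))
      != a1
    /\
    t (permute sigma (tupleOf k
        (nseq (la1 + la2) a2 ++ nseq (la1 + la2) a1 ++ map num xs ++ tailBlock i l)))
      != a2.
Proof.
move=> xs szxs xsi.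
split; first exact: (polymorphism_neq_aj ht hsum hp hyp (j := ord0)).
exact: (polymorphism_neq_aj ht hsum hp hyp (j := ord_max)).
Qed.
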